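(* Let $k\geq 1$. Every graph $G$ with $n$ vertices and no $(k+1)$-clique satisfies $c(G)\leq\left(\frac{n}{k}+1\right)^k$.
   Context: All graphs are finite, simple and undirected. A clique of a graph $G$ is a (possibly empty) set of pairwise adjacent vertices, a $k$-clique is a clique of cardinality $k$, and $c(G)$ denotes the number of cliques of $G$ (including the empty clique). *)

From mathcomp Require Import all_boot all_order all_algebra.
Set Implicit Arguments. Unset Strict Implicit. Unset Printing Implicit Defensive.

(* A finite simple graph: vertex type T : finType, adjacency e : rel T,
   assumed symmetric and irreflexive (hypotheses in the theorem). *)

Definition is_clique (T : finType) (e : rel T) (A : {set T}) : bool :=
  [forall x in A, forall y in A, (x != y) ==> e x y].

(* c(G): the number of cliques, including the empty clique. *)
Definition num_cliques (T : finType) (e : rel T) : nat :=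
  #|[set A : {set T} | is_clique e A]|.

From mathcomp Require Import all_boot all_order all_algebra.
From mathcomp Require Import ring lra.
Import Order.TTheory GRing.Theory Num.Theory.
Set Implicit Arguments. Unset Strict Implicit.

(* Induct on k, bounding the cliques inside a vertex set U without (k+1)-clique.
   Let v have maximum degree m within U and A = N(v) ∩ U.  A clique of U either
   lies in A or contains some b in U \ A, and is then b plus a clique of
   N(b) ∩ U.  Each of these 1 + (|U| - m) vertex sets has at most m vertices
   and no k-clique, so by induction c(U) <= (1 + |U| - m) (m/(k-1) + 1)^(k-1);
   AM-GM applied to 1 + |U| - m and k-1 copies of m/(k-1) + 1 bounds this by
   (|U|/k + 1)^k. *)

Section Cliques.
Variables (T : finType) (e : rel T).

Definition cliques_in (U : {set T}) : {set {set T}} :=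
  [set S : {set T} | (S \subset U) && is_clique e S].

Lemma in_cliques_in (U S : {set T}) :
  (S \in cliques_in U) = (S \subset U) && is_clique e S.
Proof. by rewrite inE. Qed.

Definition neighbours (v : T) : {set T} := [set y | e v y].

Definition clique_bounded (U : {set T}) (k : nat) : Prop :=
  forall S : {set T}, S \subset U -> is_clique e S -> #|S| <= k.

Lemma is_cliqueP (A : {set T}) :
  reflect {in A &, forall x y, x != y -> e x y} (is_clique e A).
Proof.
apply: (iffP forall_inP) => [cA x y xA yA xy | cA x xA].
  by move/forall_inP: (cA x xA) => /(_ y yA) /implyP; apply.
by apply/forall_inP => y yA; apply/implyP; apply: cA.
Qed.

Lemma is_clique_subset (A B : {set T}) :
  B \subset A -> is_clique e A -> is_clique e B.
Proof.
move=> /subsetP sBA /is_cliqueP cA; apply/is_cliqueP => x y xB yB.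
by apply: cA; apply: sBA.
Qed.

Lemma is_clique_setU1 (v : T) (S : {set T}) : symmetric e ->
  {subset S <= neighbours v} -> is_clique e S -> is_clique e (v |: S).
Proof.
move=> e_sym sSNv /is_cliqueP cS.
have Nv y : y \in S -> e v y by move/sSNv; rewrite inE.
apply/is_cliqueP => x y /setU1P[->|xS] /setU1P[->|yS].
- by rewrite eqxx.
- by move=> _; apply: Nv.
- by move=> _; rewrite e_sym; apply: Nv.
- exact: cS.
Qed.

Lemma leq_card_bigcup (I V : finType) (P : {pred I}) (F : I -> {set V}) :
  #|\bigcup_(i in P) F i| <= \sum_(i in P) #|F i|.
Proof.
apply: (big_ind2 (fun (X : {set V}) n => #|X| <= n)) => //; first by rewrite cards0.
by move=> X1 X2 n1 n2 le1 le2; rewrite (leq_trans (leq_card_setU _ _)) ?leq_add.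
Qed.

Lemma card_cliques_in_split (U A : {set T}) : A \subset U ->
  #|cliques_in U| <=
    #|cliques_in A| + \sum_(b in U :\: A) #|cliques_in (U :&: neighbours b)|.
Proof.
move=> sAU.
pose through b := [set S in cliques_in U | b \in S].
have cover_U : cliques_in U \subset cliques_in A :|: \bigcup_(b in U :\: A) through b.
  apply/subsetP => S; rewrite in_setU !in_cliques_in => /andP[sSU cS].
  have [sSA|/subsetPn[b bS bA]] := boolP (S \subset A); first by rewrite cS.
  apply/bigcupP; exists b; first by rewrite !inE bA (subsetP sSU).
  by rewrite inE in_cliques_in sSU cS bS.
have through_from_nbhd b :
    through b \subset (fun S => b |: S) @: cliques_in (U :&: neighbours b).
  apply/subsetP => S; rewrite inE in_cliques_in => /andP[/andP[sSU cS] bS].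
  apply/imsetP; exists (S :\ b); last by rewrite setD1K.
  rewrite in_cliques_in (is_clique_subset (subD1set S b) cS) andbT.
  apply/subsetP => x; rewrite !inE => /andP[xb xS].
  by rewrite (subsetP sSU) //= (is_cliqueP _ cS) // eq_sym.
rewrite (leq_trans (subset_leq_card cover_U)) // (leq_trans (leq_card_setU _ _)) //.
rewrite leq_add2l (leq_trans (leq_card_bigcup _ _)) // leq_sum // => b _.
exact: leq_trans (subset_leq_card (through_from_nbhd b)) (leq_imset_card _ _).
Qed.

Lemma card_cliques_in_bounded0 (U : {set T}) :
  clique_bounded U 0 -> #|cliques_in U| <= 1.
Proof.
move=> U0; rewrite -(cards1 (@set0 T)) subset_leq_card //.
apply/subsetP => S; rewrite !inE => /andP[sSU cS].
by rewrite -cards_eq0 -leqn0 U0.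
Qed.

Lemma clique_bounded_neighbours (U : {set T}) (k : nat) (b : T) :
  symmetric e -> irreflexive e -> b \in U ->
  clique_bounded U k.+1 -> clique_bounded (U :&: neighbours b) k.
Proof.
move=> e_sym e_irr bU Uk S /subsetP sS cS.
have bS : b \notin S by apply/negP => /sS; rewrite !inE e_irr andbF.
have sSNb : {subset S <= neighbours b} by move=> x /sS; rewrite inE => /andP[].
have card_bS : #|b |: S| = #|S|.+1 by rewrite cardsU1 bS.
rewrite -ltnS -card_bS Uk ?is_clique_setU1 //.
by apply/subsetP => x /setU1P[->|/sS]; rewrite ?inE => // /andP[].
Qed.

Lemma clique_bounded_setT (k : nat) :
  (forall A : {set T}, is_clique e A -> #|A| != k.+1) -> clique_bounded [set: T] k.
Proof.
move=> no_clique S _ cS; rewrite leqNgt; apply/negP.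
move=> /card_geqP[s [s_uniq s_size sS]].
have cs : is_clique e [set x in s].
  by apply: is_clique_subset cS; apply/subsetP => x; rewrite inE; apply: sS.
by move: (no_clique _ cs); rewrite cardsE (card_uniqP s_uniq) s_size eqxx.
Qed.

End Cliques.

Local Open Scope ring_scope.

Lemma AGM_mul_exprn (R : numFieldType) (x y : R) (k : nat) : 0 <= x -> 0 <= y ->
  x * y ^+ k <= ((x + k%:R * y) / k.+1%:R) ^+ k.+1.
Proof.
move=> x_ge0 y_ge0.
pose E (i : 'I_k.+1) := if i == ord0 then x else y.
have E_ge0 : {in predT, forall i, 0 <= E i} by move=> i _; rewrite /E; case: ifP.
have [+ _] := leif_AGM E_ge0.
have Elift i : E (lift ord0 i) = y by rewrite /E eq_sym (negbTE (neq_lift _ _)).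
rewrite !big_ord_recl card_ord.
under eq_bigr do rewrite Elift.
under [\sum_(i < k) _]eq_bigr do rewrite Elift.
by rewrite prodr_const sumr_const card_ord /E eqxx mulr_natl.
Qed.

Lemma clique_bound_step (R : realFieldType) (k : nat) (m n : R) :
  0 <= m -> m <= n ->
  (1 + (n - m)) * (m / k%:R + 1) ^+ k <= (n / k.+1%:R + 1) ^+ k.+1.
Proof.
move=> m_ge0 le_mn; case: k => [|k]; first by rewrite expr0 mulr1 expr1 divr1; lra.
apply: le_trans (AGM_mul_exprn _ _ _) _; [lra | by rewrite addr_ge0 ?divr_ge0 |].
rewrite [X in X ^+ _ <= _](_ : _ = n / k.+2%:R + 1) //.
have k_ge0 : 0 <= k%:R :> R by [].
rewrite -[k.+2]addn1 -[k.+1]addn1 !natrD; field; lra.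
Qed.

Lemma card_cliques_in_le (R : realFieldType) (T : finType) (e : rel T) (k : nat)
    (U : {set T}) :
  symmetric e -> irreflexive e -> clique_bounded e U k ->
  #|cliques_in e U|%:R <= (#|U|%:R / k%:R + 1) ^+ k :> R.
Proof.
move=> e_sym e_irr; elim: k U => [|k IHk] U Uk.
  by rewrite expr0 -[1]/(1%:R) ler_nat card_cliques_in_bounded0.
have [->|[v0 v0U]] := set_0Vmem U.
  rewrite cards0 mul0r add0r expr1n -[1]/(1%:R) ler_nat card_cliques_in_bounded0 //.
  by move=> S; rewrite subset0 => /eqP->; rewrite cards0.
have [v vU v_max] := arg_maxnP (fun v => #|U :&: neighbours e v|) v0U.
set A := U :&: neighbours e v; have sAU : A \subset U by apply: subsetIl.
set y : R := (#|A|%:R / k%:R + 1) ^+ k.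
have part_le b : b \in U -> #|cliques_in e (U :&: neighbours e b)|%:R <= y.
  move=> bU; apply: le_trans (IHk _ (clique_bounded_neighbours e_sym e_irr bU Uk)) _.
  rewrite lerXn2r ?nnegrE ?addr_ge0 ?divr_ge0 // lerD2r ler_wpM2r ?invr_ge0 //.
  by rewrite ler_nat; apply: v_max.
apply: le_trans _ (clique_bound_step k (ler0n _ #|A|) _); last first.
  by rewrite ler_nat subset_leq_card.
apply: le_trans (_ : (#|cliques_in e A| + \sum_(b in U :\: A)
    #|cliques_in e (U :&: neighbours e b)|)%:R <= _).
  by rewrite ler_nat card_cliques_in_split.
rewrite natrD natr_sum mulrDl mul1r lerD ?part_le //.
have card_UA : #|U :\: A| = (#|U| - #|A|)%N by rewrite cardsD (setIidPr sAU).
rewrite -natrB ?subset_leq_card // -card_UA mulr_natl -sumr_const.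
by apply: ler_sum => b; rewrite inE => /andP[_ /part_le].
Qed.

Theorem proposition9 (k : nat) (T : finType) (e : rel T) :
  (1 <= k)%N ->
  symmetric e -> irreflexive e ->
  (forall A : {set T}, is_clique e A -> #|A| != k.+1) ->
  ((num_cliques e)%:R <= (#|T|%:R / k%:R + 1) ^+ k :> rat)%R.
Proof.
move=> _ e_sym e_irr no_clique.
have -> : num_cliques e = #|cliques_in e [set: T]|.
  by apply: eq_card => S; rewrite in_cliques_in inE subsetT.
by rewrite -cardsT card_cliques_in_le //; apply: clique_bounded_setT.
Qed.
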